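(* Let $(\mu,\sigma)\in\mathbb{K}[[\mathtt{x}]]\times\mathfrak{M}$ be topologically nilpotent, i.e. $\lim_{n\to\infty}(\mu,\sigma)^{\rtimes n}=(0,0)$. Then for every sequence of scalars $(\alpha_n)_{n\in\mathbb{N}}$ in $\mathbb{K}$, the family $(\alpha_n(\mu,\sigma)^{\rtimes n})_{n\in\mathbb{N}}$ is summable in $\mathbb{K}[[\mathtt{x}]]\times\mathfrak{M}$.
   Context: $\mathbb{K}$ is a field of characteristic zero (discrete topology); $\mathbb{K}[[\mathtt{x}]]$ has the $(\mathtt{x})$-adic topology; $\mathfrak{M}:=\mathtt{x}\mathbb{K}[[\mathtt{x}]]$ the subspace topology; $\mathbb{K}[[\mathtt{x}]]\times\mathfrak{M}$ the product topology and componentwise vector space structure. For $f=\sum f_n\mathtt{x}^n$ and $\sigma\in\mathfrak{M}$, $f\circ\sigma:=\sum f_n\sigma^n$. Product: $(\mu_1,\sigma_1)\rtimes(\mu_2,\sigma_2):=((\mu_1\circ\sigma_2)\mu_2,\sigma_1\circ\sigma_2)$; powers $(\mu,\sigma)^{\rtimes0}:=(1,\mathtt{x})$, $(\mu,\sigma)^{\rtimes n}$ the $n$-fold product. A family $(u_n)$ in a Hausdorff commutative topological group is summable if the net of finite partial sums over finite subsets of $\mathbb{N}$ (ordered by inclusion) converges. *)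

From mathcomp Require Import all_boot all_order all_algebra.
Set Implicit Arguments. Unset Strict Implicit. Unset Printing Implicit Defensive.
Import Order.TTheory GRing.Theory Num.Theory.
Local Open Scope ring_scope.

Definition fps (K : fieldType) := nat -> K.

Section FPS.
Variable K : fieldType.

Definition fps_zero : fps K := fun _ => 0.
Definition fps_one : fps K := fun k => (k == 0%N)%:R.
Definition fps_X : fps K := fun k => (k == 1%N)%:R.
Definition fps_add (f g : fps K) : fps K := fun k => f k + g k.
Definition fps_scale (a : K) (f : fps K) : fps K := fun k => a * f k.
Definition fps_mul (f g : fps K) : fps K :=
  fun k => \sum_(i < k.+1) f i * g (k - i)%N.
Definition fps_pow (f : fps K) (n : nat) : fps K := iter n (fps_mul f) fps_one.

(* membership in the maximal ideal M = x K[[x]] *)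
Definition inM (s : fps K) : Prop := s 0%N = 0.

(* composition f o s := sum_n f_n s^n; for s in M the series s^n has
   valuation >= n, so the coefficient of x^k only involves n <= k. *)
Definition fps_comp (f s : fps K) : fps K :=
  fun k => \sum_(n < k.+1) f n * fps_pow s n k.

Definition sdprod (p q : fps K * fps K) : fps K * fps K :=
  (fps_mul (fps_comp p.1 q.2) q.1, fps_comp p.2 q.2).

Fixpoint sdpow (p : fps K * fps K) (n : nat) : fps K * fps K :=
  match n with
  | 0%N => (fps_one, fps_X)
  | n'.+1 => sdprod (sdpow p n') p
  end.

Definition pz_add (p q : fps K * fps K) := (fps_add p.1 q.1, fps_add p.2 q.2).
Definition pz_scale (a : K) (p : fps K * fps K) :=
  (fps_scale a p.1, fps_scale a p.2).
Definition pz_zero : fps K * fps K := (fps_zero, fps_zero).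

(* agreement of coefficients below N: the basic (x)-adic neighbourhoods
   (x^N K[[x]]), product topology on pairs *)
Definition pair_close (N : nat) (p q : fps K * fps K) : Prop :=
  forall k, (k < N)%N -> p.1 k = q.1 k /\ p.2 k = q.2 k.

Definition pair_seq_lim (u : nat -> fps K * fps K) (l : fps K * fps K) : Prop :=
  forall N, exists n0, forall n, (n0 <= n)%N -> pair_close N (u n) l.

Definition pair_fsum (u : nat -> fps K * fps K) (F : seq nat) :=
  foldr (fun i acc => pz_add (u i) acc) pz_zero F.

(* summability: the net of finite partial sums, indexed by finite subsets of
   nat ordered by inclusion, converges to a limit in K[[x]] x M *)
Definition pair_summable (u : nat -> fps K * fps K) : Prop :=
  exists S : fps K * fps K, inM S.2 /\
    forall N, exists F0 : seq nat, uniq F0 /\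
      forall F : seq nat, uniq F -> {subset F0 <= F} ->
        pair_close N (pair_fsum u F) S.

End FPS.

(* A topologically nilpotent element has powers converging to 0 in the (x)-adic
   product topology, so for every coefficient index k only finitely many
   scaled powers have a nonzero k-th coefficient.  The sum of the family is
   then defined coefficientwise by finite sums, and every finite partial sum
   containing the relevant initial segment of indices agrees with it below
   any given order. *)
From mathcomp Require Import all_boot all_order all_algebra.
From Stdlib Require Import ClassicalEpsilon.
Set Implicit Arguments. Unset Strict Implicit. Unset Printing Implicit Defensive.
Import Order.TTheory GRing.Theory Num.Theory.
Local Open Scope ring_scope.

Lemma big_uniq_supset_iota (V : nmodType) (f : nat -> V) (B : nat) (F : seq nat) :
  (forall i, (B <= i)%N -> f i = 0) -> uniq F -> {subset iota 0 B <= F} ->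
  \sum_(i <- F) f i = \sum_(i < B) f i.
Proof.
move=> f_eq0 uniqF subF.
rewrite (bigID (fun i => (i < B)%N)) /= [X in _ + X]big1; last first.
  by move=> i; rewrite -leqNgt; apply: f_eq0.
rewrite addr0 -big_filter -(big_mkord xpredT) /=.
apply: perm_big; apply: uniq_perm; [exact: filter_uniq | exact: iota_uniq |].
move=> i; rewrite mem_filter mem_iota add0n subn0 /=.
by case: ltnP => //= ltiB; rewrite subF ?mem_iota ?add0n.
Qed.

Section PairSeries.
Variable K : fieldType.
Implicit Types (u : nat -> fps K * fps K) (alpha : nat -> K).

Lemma pair_fsum_coef u F k :
  (pair_fsum u F).1 k = \sum_(i <- F) (u i).1 k /\
  (pair_fsum u F).2 k = \sum_(i <- F) (u i).2 k.
Proof.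
elim: F => [|i F [IH1 IH2]]; first by rewrite !big_nil.
by rewrite !big_cons /= /fps_add -IH1 -IH2.
Qed.

Lemma pair_seq_lim0_scale u alpha :
  pair_seq_lim u (pz_zero K) ->
  pair_seq_lim (fun n => pz_scale (alpha n) (u n)) (pz_zero K).
Proof.
move=> u_lim0 N; have [n0 hn0] := u_lim0 N; exists n0 => n len0n k ltkN.
have [u1_eq0 u2_eq0] := hn0 n len0n k ltkN.
by rewrite /= /fps_scale u1_eq0 u2_eq0 !mulr0.
Qed.

(* The k-th coefficient of the sum is the finite sum over n < m k.+1, where
   m is a modulus of convergence of u to 0. *)
Lemma pair_summable_lim0 u :
  pair_seq_lim u (pz_zero K) -> (forall n, inM (u n).2) -> pair_summable u.
Proof.
move=> u_lim0 u2_inM.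
have [m hm] : exists m : nat -> nat,
    forall N n, (m N <= n)%N -> pair_close N (u n) (pz_zero K).
  exact: (choice (fun N n0 => forall n, (n0 <= n)%N -> _) u_lim0).
have u_eq0 k n : (m k.+1 <= n)%N -> (u n).1 k = 0 /\ (u n).2 k = 0.
  by move=> len; exact: hm n len k (ltnSn k).
exists ((fun k => \sum_(n < m k.+1) (u n).1 k),
        (fun k => \sum_(n < m k.+1) (u n).2 k)); split.
  by apply: big1 => n _; exact: u2_inM.
move=> N; exists (iota 0 (\max_(k < N) m k.+1)); split; first exact: iota_uniq.
move=> F uniqF subF k ltkN; have [-> ->] := pair_fsum_coef u F k.
have subFk : {subset iota 0 (m k.+1) <= F}.
  move=> i; rewrite mem_iota add0n => ltim; apply: subF.
  rewrite mem_iota add0n (leq_trans ltim) //.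
  exact: (leq_bigmax (F := fun j : 'I_N => m j.+1) (Ordinal ltkN)).
by split; apply: big_uniq_supset_iota => // n /u_eq0 [].
Qed.

Lemma sdpow_inM (p : fps K * fps K) n : inM (sdpow p n).2.
Proof.
elim: n => [|n IH] /=; first by rewrite /inM /fps_X.
by rewrite /inM /fps_comp big_ord1 IH mul0r.
Qed.

End PairSeries.

Theorem mainTheorem6 (K : fieldType) (charK0 : [pchar K] =i pred0)
  (mu sigma : fps K) (hsigma : inM sigma)
  (hnil : pair_seq_lim (fun n => sdpow (mu, sigma) n) (pz_zero K))
  (alpha : nat -> K) :
  pair_summable (fun n => pz_scale (alpha n) (sdpow (mu, sigma) n)).
Proof.
apply: pair_summable_lim0; first exact: pair_seq_lim0_scale.
by move=> n; rewrite /inM /= /fps_scale sdpow_inM mulr0.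
Qed.
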